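(* Let $(\mathcal{C},\mathbb{E},\mathfrak{s})$ be an extriangulated category with enough injective objects and enough projective morphisms, and let $\mathbb{F}\subseteq\mathbb{E}$ be an additive subfunctor having enough injective morphisms. Then the following are equivalent: (1) $\mathbb{F}$ has enough special injective morphisms; (2) $\mathbb{F}=\mathrm{Ph}(\mathbb{F})^\star$; (3) $\mathrm{Ph}(\mathbb{F})^{\perp_{\mathbb{E}}}=\mathbb{F}\text{-}\mathrm{inj}$.
   Context: An extriangulated category $(\mathcal{C},\mathbb{E},\mathfrak{s})$ (Nakaoka–Palu): additive $\mathcal{C}$, biadditive $\mathbb{E}:\mathcal{C}^{\mathrm{op}}\times\mathcal{C}\to\mathrm{Ab}$, additive realization $\mathfrak{s}$ assigning to each $\delta\in\mathbb{E}(C,A)$ an equivalence class of sequences $A\to B\to C$, forming $\mathbb{E}$-triangles $A\to B\to C\overset{\delta}{\dashrightarrow}$, satisfying (ET1)–(ET4), (ET3)$^{\mathrm{op}}$, (ET4)$^{\mathrm{op}}$. Notation $a_\star\delta=\mathbb{E}(C,a)(\delta)$, $c^\star\delta=\mathbb{E}(c,A)(\delta)$; a morphism of $\mathbb{E}$-triangles is a commuting triple $(a,b,c)$ with $a_\star\delta=c^\star\delta'$. Enough injective objects: every $A$ admits an $\mathbb{E}$-triangle $A\to E\to C\overset{\delta}{\dashrightarrow}$ with $\mathbb{E}(-,E)=0$. Enough projective morphisms: every $C$ admits an $\mathbb{E}$-triangle $K\to P\xrightarrow{p}C\overset{\gamma}{\dashrightarrow}$ with $p^\star\delta=0$ for all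 $\delta\in\mathbb{E}(C,A)$. Additive subfunctor $\mathbb{F}$: subgroups $\mathbb{F}(C,A)\subseteq\mathbb{E}(C,A)$ stable under $a_\star,c^\star$; $\mathbb{F}$-triangles have extension in $\mathbb{F}$. $\mathrm{Ph}(\mathbb{F})$: morphisms $\varphi:X\to C$ with $\varphi^\star\delta\in\mathbb{F}(X,A)$ for all $\delta\in\mathbb{E}(C,A)$ (an ideal). $\mathbb{F}\text{-}\mathrm{inj}$: $i:A\to Y$ with $i_\star\delta=0$ for all $\delta\in\mathbb{F}(C,A)$. For an ideal $\mathcal{I}$, $\mathcal{I}^\star(X,A)=\{i^\star\delta\mid i\in\mathcal{I}(X,C),\delta\in\mathbb{E}(C,A)\}$ and $\mathcal{I}^{\perp_{\mathbb{E}}}=\{g:A\to Y\mid m^\star g_\star\delta=0\ \forall m\in\mathcal{I},\,m:X\to C,\ \forall\delta\in\mathbb{E}(C,A)\}$. $\mathbb{F}$ has enough injective morphisms: every $A$ admits an $\mathbb{F}$-triangle $A\xrightarrow{e}B\to C\overset{\delta}{\dashrightarrow}$ with $e\in\mathbb{F}\text{-}\mathrm{inj}$; enough special injective morphisms: moreover there is an $\mathbb{E}$-triangle $A\to B'\to C'\overset{\delta'}{\dashrightarrow}$ and a morphism $(\mathrm{id}_A,b,\varphi)$ from the former to it with $\varphi\in\mathrm{Ph}(\mathbb{F})$. *)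

From HB Require Import structures.
From mathcomp Require Import all_boot all_algebra.
Set Implicit Arguments. Unset Strict Implicit. Unset Printing Implicit Defensive.
Import GRing.Theory.
Local Open Scope ring_scope.

Record precat := PreCat {
  ob : Type;
  hom : ob -> ob -> zmodType;
  idm : forall X, hom X X;
  comp : forall X Y Z, hom Y Z -> hom X Y -> hom X Z;
  compA : forall W X Y Z (h : hom Y Z) (g : hom X Y) (f : hom W X),
      comp h (comp g f) = comp (comp h g) f;
  comp1m : forall X Y (f : hom X Y), comp (idm Y) f = f;
  compm1 : forall X Y (f : hom X Y), comp f (idm X) = f;
  compDl : forall X Y Z (g g' : hom Y Z) (f : hom X Y),
      comp (g + g') f = comp g f + comp g' f;
  compDr : forall X Y Z (g : hom Y Z) (f f' : hom X Y),
      comp g (f + f') = comp g f + comp g f'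
}.
Arguments hom {p}.
Arguments idm {p}.
Arguments comp {p X Y Z}.

Section Cat.
Variable C : precat.

Definition is_zero_obj (Z : ob C) : Prop :=
  forall X : ob C, (forall f : hom X Z, f = 0) /\ (forall g : hom Z X, g = 0).

Definition is_biprod (A B P : ob C) (p1 : hom P A) (p2 : hom P B)
    (i1 : hom A P) (i2 : hom B P) : Prop :=
  [/\ comp p1 i1 = idm A, comp p2 i2 = idm B, comp p1 i2 = 0, comp p2 i1 = 0
    & comp i1 p1 + comp i2 p2 = idm P].

Definition additive_cat : Prop :=
  (exists Z : ob C, is_zero_obj Z) /\
  (forall A B : ob C, exists P p1 p2 i1 i2, @is_biprod A B P p1 p2 i1 i2).

Definition is_iso (X Y : ob C) (f : hom X Y) : Prop :=
  exists g : hom Y X, comp g f = idm X /\ comp f g = idm Y.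
End Cat.

(* Eob Z A = E(Z,A);  pull c d = c^* d;  push a d = a_* d.             *)
Record bifunctor (C : precat) := Bifunctor {
  Eob : ob C -> ob C -> zmodType;
  pull : forall (X Y A : ob C), hom X Y -> Eob Y A -> Eob X A;
  push : forall (Z A B : ob C), hom A B -> Eob Z A -> Eob Z B
}.
Arguments Eob {C}.
Arguments pull {C} _ {X Y A}.
Arguments push {C} _ {Z A B}.

Section Bifun.
Variables (C : precat) (E : bifunctor C).

Definition biadditive_functor : Prop :=
  (forall Z A (d : Eob E Z A), pull E (idm Z) d = d) /\
      (forall Z A (d : Eob E Z A), push E (idm A) d = d) /\
      (forall X Y Z A (c : hom Y Z) (c' : hom X Y) (d : Eob E Z A),
          pull E (comp c c') d = pull E c' (pull E c d)) /\
      (forall Z A B D (a : hom B D) (a' : hom A B) (d : Eob E Z A),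
          push E (comp a a') d = push E a (push E a' d)) /\
      (forall X Z A B (c : hom X Z) (a : hom A B) (d : Eob E Z A),
          push E a (pull E c d) = pull E c (push E a d)) /\
      (forall X Z A (c : hom X Z) (d d' : Eob E Z A),
          pull E c (d + d') = pull E c d + pull E c d') /\
      (forall Z A B (a : hom A B) (d d' : Eob E Z A),
          push E a (d + d') = push E a d + push E a d') /\
      (forall X Z A (c c' : hom X Z) (d : Eob E Z A),
          pull E (c + c') d = pull E c d + pull E c' d)
    /\ (forall Z A B (a a' : hom A B) (d : Eob E Z A),
          push E (a + a') d = push E a d + push E a' d).

(* A realization: @s _ _ d B f g  means  "A -f-> B -g-> Z belongs to s(d)",
   for d in E(Z,A). *)
Definition realization_data :=
  forall (Z A : ob C), Eob E Z A -> forall B : ob C, hom A B -> hom B Z -> Prop.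

Definition seq_equiv (A Z B B' : ob C) (f : hom A B) (g : hom B Z)
    (f' : hom A B') (g' : hom B' Z) : Prop :=
  exists b : hom B B', [/\ is_iso b, comp b f = f' & comp g' b = g].

(* d in E(Z,A) is the sum  d1 (+) d2  of d1 in E(Z1,A1), d2 in E(Z2,A2),
   with respect to the given biproducts A = A1 (+) A2 and Z = Z1 (+) Z2. *)
Definition is_Esum (A1 A2 A Z1 Z2 Z : ob C)
    (pA1 : hom A A1) (pA2 : hom A A2) (iZ1 : hom Z1 Z) (iZ2 : hom Z2 Z)
    (d1 : Eob E Z1 A1) (d2 : Eob E Z2 A2) (d : Eob E Z A) : Prop :=
  [/\ push E pA1 (pull E iZ1 d) = d1, push E pA2 (pull E iZ2 d) = d2,
      push E pA1 (pull E iZ2 d) = 0 & push E pA2 (pull E iZ1 d) = 0].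

Section Real.
Variable s : realization_data.

(* s(d) is an equivalence class of sequences, and s is a realization
   (Nakaoka--Palu, Def. 2.9). *)
Definition is_realization : Prop :=
  [/\ (forall Z A (d : Eob E Z A), exists B f g, @s _ _ d B f g),
      (forall Z A (d : Eob E Z A) B B' (f : hom A B) (g : hom B Z)
              (f' : hom A B') (g' : hom B' Z),
          @s _ _ d B f g -> seq_equiv f g f' g' -> @s _ _ d B' f' g'),
      (forall Z A (d : Eob E Z A) B B' (f : hom A B) (g : hom B Z)
              (f' : hom A B') (g' : hom B' Z),
          @s _ _ d B f g -> @s _ _ d B' f' g' -> seq_equiv f g f' g')
    & (forall A Z A' Z' (d : Eob E Z A) (d' : Eob E Z' A')
              (a : hom A A') (c : hom Z Z') B B' (f : hom A B) (g : hom B Z)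
              (f' : hom A' B') (g' : hom B' Z'),
          push E a d = pull E c d' -> @s _ _ d B f g -> @s _ _ d' B' f' g' ->
          exists b : hom B B', comp b f = comp f' a /\ comp g' b = comp c g)].

Definition additive_realization : Prop :=
  (forall A Z P (p1 : hom P A) (p2 : hom P Z) (i1 : hom A P) (i2 : hom Z P),
      is_biprod p1 p2 i1 i2 -> @s _ _ (0 : Eob E Z A) P i1 p2) /\
  (forall A1 A2 A Z1 Z2 Z B1 B2 B
          (pA1 : hom A A1) (pA2 : hom A A2) (iA1 : hom A1 A) (iA2 : hom A2 A)
          (pZ1 : hom Z Z1) (pZ2 : hom Z Z2) (iZ1 : hom Z1 Z) (iZ2 : hom Z2 Z)
          (pB1 : hom B B1) (pB2 : hom B B2) (iB1 : hom B1 B) (iB2 : hom B2 B)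
          (d1 : Eob E Z1 A1) (d2 : Eob E Z2 A2) (d : Eob E Z A)
          (f1 : hom A1 B1) (g1 : hom B1 Z1) (f2 : hom A2 B2) (g2 : hom B2 Z2),
      is_biprod pA1 pA2 iA1 iA2 -> is_biprod pZ1 pZ2 iZ1 iZ2 ->
      is_biprod pB1 pB2 iB1 iB2 ->
      is_Esum pA1 pA2 iZ1 iZ2 d1 d2 d ->
      @s _ _ d1 B1 f1 g1 -> @s _ _ d2 B2 f2 g2 ->
      @s _ _ d B (comp iB1 (comp f1 pA1) + comp iB2 (comp f2 pA2))
            (comp iZ1 (comp g1 pB1) + comp iZ2 (comp g2 pB2))).

Definition ET3 : Prop :=
  forall A Z A' Z' (d : Eob E Z A) (d' : Eob E Z' A') B B'
         (f : hom A B) (g : hom B Z) (f' : hom A' B') (g' : hom B' Z')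
         (a : hom A A') (b : hom B B'),
    @s _ _ d B f g -> @s _ _ d' B' f' g' -> comp b f = comp f' a ->
    exists c : hom Z Z', comp g' b = comp c g /\ push E a d = pull E c d'.

Definition ET3op : Prop :=
  forall A Z A' Z' (d : Eob E Z A) (d' : Eob E Z' A') B B'
         (f : hom A B) (g : hom B Z) (f' : hom A' B') (g' : hom B' Z')
         (b : hom B B') (c : hom Z Z'),
    @s _ _ d B f g -> @s _ _ d' B' f' g' -> comp g' b = comp c g ->
    exists a : hom A A', comp b f = comp f' a /\ push E a d = pull E c d'.

Definition ET4 : Prop :=
  forall A B C' D F (d : Eob E D A) (d' : Eob E F B)
         (f : hom A B) (f' : hom B D) (g : hom B C') (g' : hom C' F),
    @s _ _ d B f f' -> @s _ _ d' C' g g' ->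
    exists (X : ob C) (dd : Eob E X A) (h' : hom C' X)
           (x : hom D X) (e : hom X F),
      [/\ @s _ _ dd C' (comp g f) h',
          @s _ _ (push E f' d') X x e,
          comp x f' = comp h' g /\ comp e h' = g',
          pull E x dd = d
        & push E f dd = pull E e d'].

Definition ET4op : Prop :=
  forall D B A F C' (d : Eob E A D) (d' : Eob E B F)
         (f' : hom D B) (f : hom B A) (g' : hom F C') (g : hom C' B),
    @s _ _ d B f' f -> @s _ _ d' C' g' g ->
    exists (X : ob C) (dd : Eob E A X) (h' : hom X C')
           (e : hom F X) (x : hom X D),
      [/\ @s _ _ dd C' h' (comp f g),
          @s _ _ (pull E f' d') X e x,
          comp f' x = comp g h' /\ comp h' e = g',
          push E x dd = d
        & pull E f dd = push E e d'].
End Real.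
End Bifun.

Record extri := Extri {
  xcat :> precat;
  x_additive : additive_cat xcat;
  xE : bifunctor xcat;
  xs : realization_data xE;
  x_ET1 : biadditive_functor xE;
  x_real : is_realization xs;
  x_ET2 : additive_realization xs;
  x_ET3 : ET3 xs;
  x_ET3op : ET3op xs;
  x_ET4 : ET4 xs;
  x_ET4op : ET4op xs
}.

Section Extri.
Variable X : extri.
Local Notation E := (xE X).
Local Notation Eg := (Eob (xE X)).

Definition Etri (Z A B : ob X) (d : Eg Z A) (f : hom A B) (g : hom B Z) : Prop :=
  @xs X _ _ d B f g.

Definition enough_injective_objects : Prop :=
  forall A : ob X, exists (I Z : ob X) (d : Eg Z A) (f : hom A I) (g : hom I Z),
    Etri d f g /\ (forall (Y : ob X) (t : Eg Y I), t = 0).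

Definition enough_projective_morphisms : Prop :=
  forall Z : ob X, exists (K P : ob X) (gm : Eg Z K) (k : hom K P) (p : hom P Z),
    Etri gm k p /\ (forall (A : ob X) (d : Eg Z A), pull E p d = 0).

Definition subfunctor := forall Z A : ob X, Eg Z A -> Prop.

Definition is_additive_subfunctor (F : subfunctor) : Prop :=
  [/\ (forall Z A, F Z A 0),
      (forall Z A (d d' : Eg Z A), F Z A d -> F Z A d' -> F Z A (d - d')),
      (forall Z A A' (a : hom A A') (d : Eg Z A), F Z A d -> F Z A' (push E a d))
    & (forall Z Z' A (c : hom Z' Z) (d : Eg Z A), F Z A d -> F Z' A (pull E c d))].

(* ideals of morphisms are represented as predicates on all hom-sets *)
Definition morclass := forall Y Z : ob X, hom Y Z -> Prop.

Definition Ph (F : subfunctor) : morclass :=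
  fun Y Z phi => forall (A : ob X) (d : Eg Z A), F Y A (pull E phi d).

Definition Finj (F : subfunctor) : morclass :=
  fun A Y i => forall (Z : ob X) (d : Eg Z A), F Z A d -> push E i d = 0.

Definition star (I : morclass) : subfunctor :=
  fun Y A t => exists (Z : ob X) (i : hom Y Z) (d : Eg Z A), I Y Z i /\ t = pull E i d.

Definition perpE (I : morclass) : morclass :=
  fun A Y g => forall (W Z : ob X) (m : hom W Z) (d : Eg Z A),
    I W Z m -> pull E m (push E g d) = 0.

Definition Ftri (F : subfunctor) (Z A B : ob X) (d : Eg Z A)
    (f : hom A B) (g : hom B Z) : Prop := Etri d f g /\ F Z A d.

Definition enough_injective_morphisms (F : subfunctor) : Prop :=
  forall A : ob X, exists (B Z : ob X) (d : Eg Z A) (e : hom A B) (g : hom B Z),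
    Ftri F d e g /\ Finj F e.

(* morphism (id_A, b, phi) of E-triangles from (d,e,g) to (d',f',g') *)
Definition enough_special_injective_morphisms (F : subfunctor) : Prop :=
  forall A : ob X, exists (B Z : ob X) (d : Eg Z A) (e : hom A B) (g : hom B Z),
    [/\ Ftri F d e g, Finj F e &
      exists (B' Z' : ob X) (d' : Eg Z' A) (f' : hom A B') (g' : hom B' Z')
             (b : hom B B') (phi : hom Z Z'),
        [/\ Etri d' f' g',
            comp b e = comp f' (idm A),
            comp g' b = comp phi g,
            push E (idm A) d = pull E phi d'
          & Ph F phi]].

Definition subfunctor_eq (F G : subfunctor) : Prop :=
  forall Z A (d : Eg Z A), F Z A d <-> G Z A d.

Definition morclass_eq (I J : morclass) : Prop :=
  forall Y Z (f : hom Y Z), I Y Z f <-> J Y Z f.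
End Extri.

(* Every extension in Ph(F)^* already lies in F, so (2) says F is contained in
   Ph(F)^*, and (2) <-> (3) rests on F-inj of I^* being I^{perp_E} for every
   ideal I.  For (1) -> (2), an F-extension of A is killed by the special
   F-injective inflation of A, hence is a pullback of its extension d, which is
   pulled back along a morphism of Ph(F).  For (3) -> (2), enough projective
   morphisms and enough F-injective morphisms give every Z a right
   Ph(F)-approximation phi, and an injective object gives an extension eta of A
   from which every extension of A is pulled back.  The inflation of phi^* eta
   then lies in Ph(F)^{perp_E} = F-inj, so every F-extension of A is a pullback
   of phi^* eta. *)
From mathcomp Require Import all_boot all_algebra.
Set Implicit Arguments. Unset Strict Implicit. Unset Printing Implicit Defensive.
Import GRing.Theory.
Local Open Scope ring_scope.

Section Preadditive.
Variable C : precat.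

Lemma comp0r (A B Z : ob C) (g : hom B Z) : comp g (0 : hom A B) = 0.
Proof. by apply: (addrI (comp g 0)); rewrite -compDr !addr0. Qed.

Lemma comp0l (A B Z : ob C) (f : hom A B) : comp (0 : hom B Z) f = 0.
Proof. by apply: (addrI (comp 0 f)); rewrite -compDl !addr0. Qed.

Lemma is_biprod_zero_r (O B : ob C) :
  is_zero_obj O -> is_biprod (idm B) (0 : hom B O) (idm B) 0.
Proof.
move=> /(_ O) [idO0 _].
by split; rewrite ?comp1m ?comp0r ?comp0l ?(idO0 (idm O)) ?addr0.
Qed.

Lemma is_biprod_zero_l (O B : ob C) :
  is_zero_obj O -> is_biprod (0 : hom B O) (idm B) 0 (idm B).
Proof.
move=> /(_ O) [idO0 _].
by split; rewrite ?comp1m ?comp0r ?comp0l ?(idO0 (idm O)) ?add0r.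
Qed.
End Preadditive.

Section Biadditive.
Variables (C : precat) (E : bifunctor C).
Hypothesis HE : biadditive_functor E.

Lemma pull_idm Z A (d : Eob E Z A) : pull E (idm Z) d = d.
Proof. by case: HE. Qed.

Lemma push_idm Z A (d : Eob E Z A) : push E (idm A) d = d.
Proof. by case: HE => _ []. Qed.

Lemma pull_comp (W Y Z A : ob C) (c : hom Y Z) (c' : hom W Y) (d : Eob E Z A) :
  pull E (comp c c') d = pull E c' (pull E c d).
Proof. by case: HE => _ [_ []]. Qed.

Lemma push_pull (Y Z A B : ob C) (c : hom Y Z) (a : hom A B) (d : Eob E Z A) :
  push E a (pull E c d) = pull E c (push E a d).
Proof. by case: HE => _ [_ [_ [_ []]]]. Qed.

Lemma pull0 (Y Z A : ob C) (c : hom Y Z) : pull E c (0 : Eob E Z A) = 0.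
Proof.
case: HE => _ [_ [_ [_ [_ [pullD _]]]]].
by apply: (addrI (pull E c 0)); rewrite -pullD !addr0.
Qed.

Lemma push0 (Z A B : ob C) (a : hom A B) : push E a (0 : Eob E Z A) = 0.
Proof.
case: HE => _ [_ [_ [_ [_ [_ [pushD _]]]]]].
by apply: (addrI (push E a 0)); rewrite -pushD !addr0.
Qed.
End Biadditive.

Section Extriangulated.
Variable X : extri.
Local Notation E := (xE X).
Local Notation Eg := (Eob (xE X)).
Local Hint Resolve x_ET1 : core.

Lemma Etri_realize (Z A : ob X) (d : Eg Z A) :
  exists B (f : hom A B) (g : hom B Z), Etri d f g.
Proof. by case: (x_real X) => realize _ _ _; apply: realize. Qed.

Lemma Etri_morphism (A Z A' Z' : ob X) (d : Eg Z A) (d' : Eg Z' A')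
    (a : hom A A') (c : hom Z Z') B B' (f : hom A B) (g : hom B Z)
    (f' : hom A' B') (g' : hom B' Z') :
  push E a d = pull E c d' -> Etri d f g -> Etri d' f' g' ->
  exists b : hom B B', comp b f = comp f' a /\ comp g' b = comp c g.
Proof. by case: (x_real X) => _ _ _; apply. Qed.

Lemma Etri_biprod (A Z P : ob X) (p1 : hom P A) (p2 : hom P Z)
    (i1 : hom A P) (i2 : hom Z P) :
  is_biprod p1 p2 i1 i2 -> Etri (0 : Eg Z A) i1 p2.
Proof. by case: (x_ET2 X) => split_tri _; apply: split_tri. Qed.

Lemma Etri_push_inflation (Z A B : ob X) (d : Eg Z A) (f : hom A B) g :
  Etri d f g -> push E f d = 0.
Proof.
move=> Hd; have [O HO] := (x_additive X).1.
have Hs := Etri_biprod (is_biprod_zero_r B HO).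
have [c [_ ->]] := x_ET3 Hd Hs (a := f) (b := idm B) erefl.
by rewrite pull0.
Qed.

Lemma Etri_pull_deflation (Z A B : ob X) (d : Eg Z A) (f : hom A B) g :
  Etri d f g -> pull E g d = 0.
Proof.
move=> Hd; have [O HO] := (x_additive X).1.
have Hs := Etri_biprod (is_biprod_zero_l B HO).
have [a [_ <-]] := x_ET3op Hs Hd (b := idm B) (c := g) erefl.
by rewrite push0.
Qed.

(* Compare with the split triangle A -> A (+) W -> W. *)
Lemma Etri_factor_deflation (Z A B W : ob X) (d : Eg Z A) (f : hom A B)
    (g : hom B Z) (m : hom W Z) :
  Etri d f g -> pull E m d = 0 -> exists s : hom W B, m = comp g s.
Proof.
move=> Hd md0; have [P [p1 [p2 [i1 [i2 HP]]]]] := (x_additive X).2 A W.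
have e0 : push E (idm A) (0 : Eg W A) = pull E m d by rewrite push_idm.
have [b [_ gb]] := Etri_morphism e0 (Etri_biprod HP) Hd.
exists (comp b i2); case: HP => _ p2i2 _ _ _.
by rewrite compA gb -compA p2i2 compm1.
Qed.

Lemma Etri_factor_inflation (Z A B Y : ob X) (d : Eg Z A) (f : hom A B)
    (g : hom B Z) (e : hom A Y) :
  Etri d f g -> push E e d = 0 -> exists e' : hom B Y, e = comp e' f.
Proof.
move=> Hd ed0; have [P [p1 [p2 [i1 [i2 HP]]]]] := (x_additive X).2 Y Z.
have e0 : push E e d = pull E (idm Z) (0 : Eg Z Y) by rewrite pull_idm.
have [b [bf _]] := Etri_morphism e0 Hd (Etri_biprod HP).
exists (comp p1 b); case: HP => p1i1 _ _ _ _.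
by rewrite -compA bf compA p1i1 comp1m.
Qed.

Lemma Etri_push_inflation_kernel (Z A B W : ob X) (d : Eg Z A) (f : hom A B)
    (g : hom B Z) (t : Eg W A) :
  Etri d f g -> push E f t = 0 -> exists c : hom W Z, t = pull E c d.
Proof.
move=> Hd ft0; have [Y [x [y Ht]]] := Etri_realize t.
have [f' fx] := Etri_factor_inflation Ht ft0.
have [c [_ tc]] := x_ET3 Ht Hd (a := idm A) (b := f') (etrans (esym fx) (esym (compm1 f))).
by exists c; rewrite -tc push_idm.
Qed.

Lemma Etri_pull_deflation_kernel (Z K P A : ob X) (d : Eg Z K) (k : hom K P)
    (p : hom P Z) (t : Eg Z A) :
  Etri d k p -> pull E p t = 0 -> exists a : hom K A, t = push E a d.
Proof.
move=> Hd pt0; have [Y [x [y Ht]]] := Etri_realize t.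
have [s ys] := Etri_factor_deflation Ht pt0.
have [a [_ ta]] := x_ET3op Hd Ht (b := s) (c := idm Z) (etrans (esym ys) (esym (comp1m p))).
by exists a; rewrite ta pull_idm.
Qed.

Lemma universal_extension : enough_injective_objects X ->
  forall A : ob X, exists (Z0 : ob X) (eta : Eg Z0 A),
    forall Z (d : Eg Z A), exists c : hom Z Z0, d = pull E c eta.
Proof.
move=> HIO A; have [I [Z0 [eta [i [j [Heta injI]]]]]] := HIO A.
by exists Z0, eta => Z d; apply: Etri_push_inflation_kernel Heta (injI _ _).
Qed.

Lemma Finj_star (I : morclass X) : morclass_eq (perpE I) (Finj (star I)).
Proof.
move=> A Y g; split.
- by move=> perp_g Z _ [W [m [d [Im ->]]]]; rewrite push_pull //; apply: perp_g.
- by move=> inj_g W Z m d Im; rewrite -push_pull //; apply: inj_g; exists Z, m, d.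
Qed.

Lemma Finj_eq (F G : subfunctor X) :
  subfunctor_eq F G -> morclass_eq (Finj F) (Finj G).
Proof.
by move=> FG A Y i; split=> inj_i Z d /FG; apply: inj_i.
Qed.

Section Subfunctor.
Variable F : subfunctor X.
Hypothesis HF : is_additive_subfunctor F.

Lemma F_pull (Z Z' A : ob X) (c : hom Z' Z) (d : Eg Z A) : F d -> F (pull E c d).
Proof. by case: HF => _ _ _ Fpull; apply: Fpull. Qed.

Lemma F_push (Z A A' : ob X) (a : hom A A') (d : Eg Z A) : F d -> F (push E a d).
Proof. by case: HF => _ _ Fpush _; apply: Fpush. Qed.

Lemma Ph_comp_r (W Y Z : ob X) (phi : hom Y Z) (t : hom W Y) :
  Ph F phi -> Ph F (comp phi t).
Proof. by move=> Phphi A d; rewrite pull_comp //; apply: F_pull. Qed.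

Lemma Ph_comp_l (W Y Z : ob X) (c : hom Y Z) (m : hom W Y) :
  Ph F m -> Ph F (comp c m).
Proof. by move=> Phm A d; rewrite pull_comp //; apply: Phm. Qed.

Lemma star_Ph_sub (Z A : ob X) (d : Eg Z A) : star (Ph F) d -> F d.
Proof. by case=> Z' [i [d' [Phi ->]]]. Qed.

Lemma subfunctor_eq_star_Ph : (forall Z A (d : Eg Z A), F d -> star (Ph F) d) ->
  subfunctor_eq F (star (Ph F)).
Proof. by move=> FstarPh Z A d; split; [apply: FstarPh | apply: star_Ph_sub]. Qed.

(* phi is the deflation of e_* gamma, where gamma ends in a projective morphism
   p and e is an F-injective inflation of the start of gamma. *)
Lemma Ph_right_approximation :
  enough_projective_morphisms X -> enough_injective_morphisms F ->
  forall Z : ob X, exists (Y : ob X) (phi : hom Y Z), Ph F phi /\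
    forall W (m : hom W Z), Ph F m -> exists s : hom W Y, m = comp phi s.
Proof.
move=> HPM HIM Z; have [K [P [gm [k [p [Hgm projp]]]]]] := HPM Z.
have [B [Z1 [d1 [e [g1 [[Hd1 Fd1] injF_e]]]]]] := HIM K.
have [Y [u [phi Hphi]]] := Etri_realize (push E e gm).
exists Y, phi; split.
- move=> A d; have [a ->] := Etri_pull_deflation_kernel Hgm (projp _ d).
  rewrite -push_pull //; apply: F_push.
  have e_phigm : push E e (pull E phi gm) = 0.
    by rewrite push_pull // (Etri_pull_deflation Hphi).
  by have [c ->] := Etri_push_inflation_kernel Hd1 e_phigm; apply: F_pull Fd1.
- move=> W m Phm; apply: Etri_factor_deflation Hphi _.
  by rewrite -push_pull //; apply: injF_e; apply: Phm.
Qed.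

Lemma special_injective_star_Ph :
  enough_special_injective_morphisms F -> subfunctor_eq F (star (Ph F)).
Proof.
move=> HSI; apply: subfunctor_eq_star_Ph => W A t Ft.
have [B [Z [d [e [g [[Hd _] injF_e]]]]]] := HSI A.
case=> [B' [Z' [d' [f' [g' [b [phi [_ _ _ dd' Phphi]]]]]]]].
have [c ->] := Etri_push_inflation_kernel Hd (injF_e _ _ Ft).
exists Z', (comp phi c), d'; split; first exact: Ph_comp_r.
by rewrite pull_comp // -dd' push_idm.
Qed.

Lemma star_Ph_special_injective : enough_injective_morphisms F ->
  subfunctor_eq F (star (Ph F)) -> enough_special_injective_morphisms F.
Proof.
move=> HIM FstarPh A; have [B [Z [d [e [g [[Hd Fd] injF_e]]]]]] := HIM A.
exists B, Z, d, e, g; split => //.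
have [Z' [phi [d' [Phphi dd']]]] := (FstarPh _ _ d).1 Fd.
have [B' [f' [g' Hd']]] := Etri_realize d'.
have dd'_idm : push E (idm A) d = pull E phi d' by rewrite push_idm.
have [b [bf gb]] := Etri_morphism dd'_idm Hd Hd'.
by exists B', Z', d', f', g', b, phi.
Qed.

Lemma star_Ph_perpE :
  subfunctor_eq F (star (Ph F)) -> morclass_eq (perpE (Ph F)) (Finj F).
Proof.
move=> FstarPh A Y g; have perp_star := Finj_star (Ph F) g.
have star_F := Finj_eq FstarPh g; tauto.
Qed.

Lemma perpE_star_Ph : enough_injective_objects X ->
  enough_projective_morphisms X -> enough_injective_morphisms F ->
  morclass_eq (perpE (Ph F)) (Finj F) -> subfunctor_eq F (star (Ph F)).
Proof.
move=> HIO HPM HIM perpE_Finj; apply: subfunctor_eq_star_Ph => W A t Ft.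
have [Z0 [eta eta_univ]] := universal_extension HIO A.
have [Y [phi [Phphi phi_approx]]] := Ph_right_approximation HPM HIM Z0.
have [B0 [e0 [h Htheta]]] := Etri_realize (pull E phi eta).
have perp_e0 : perpE (Ph F) e0.
  move=> V Z m d Phm; have [c ->] := eta_univ _ d.
  rewrite -push_pull // -pull_comp //; have [s ->] := phi_approx _ _ (Ph_comp_l c Phm).
  by rewrite pull_comp // push_pull // (Etri_push_inflation Htheta) pull0.
have [c ->] := Etri_push_inflation_kernel Htheta ((perpE_Finj _ _ e0).1 perp_e0 _ _ Ft).
exists Z0, (comp phi c), eta; split; first exact: Ph_comp_r.
by rewrite pull_comp.
Qed.
End Subfunctor.
End Extriangulated.

Theorem corollary4p7 (X : extri) (F : subfunctor X) :
  enough_injective_objects X ->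
  enough_projective_morphisms X ->
  is_additive_subfunctor F ->
  enough_injective_morphisms F ->
  (enough_special_injective_morphisms F <-> subfunctor_eq F (star (Ph F))) /\
  (subfunctor_eq F (star (Ph F)) <-> morclass_eq (perpE (Ph F)) (Finj F)).
Proof.
move=> HIO HPM HF HIM; split; split.
- exact: special_injective_star_Ph.
- exact: star_Ph_special_injective.
- exact: star_Ph_perpE.
- exact: perpE_star_Ph.
Qed.
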